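(* Let $\mathcal{P}$ be an arbitrary set of prime numbers (finite or infinite), and let $\langle \mathcal{P} \rangle \subset \mathbb{N} = \{1,2,3,\ldots\}$ denote the set of natural numbers all of whose prime factors lie in $\mathcal{P}$ (in particular $1 \in \langle \mathcal{P}\rangle$). Then for every real number $x$, $$\Big|\sum_{n \in \langle \mathcal{P} \rangle:\, n \leq x} \frac{\mu(n)}{n}\Big| \leq 1.$$
   Context: $\mu$ denotes the Möbius function: $\mu(n) = (-1)^k$ if $n$ is a product of $k$ distinct primes, and $\mu(n)=0$ otherwise. $\langle \mathcal{P}\rangle$ is the multiplicative semigroup generated by $\mathcal{P}$ (including $1$ as the empty product). *)

From mathcomp Require Import all_boot all_order all_algebra.
From mathcomp Require Import reals.
Set Implicit Arguments. Unset Strict Implicit. Unset Printing Implicit Defensive.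
Import Order.TTheory GRing.Theory Num.Theory.

(* Moebius function: mu n = (-1)^k if n > 0 is a product of k distinct primes,
   0 otherwise (n = 0 is outside N = {1,2,...}; mu 0 := 0 by convention, irrelevant). *)
Definition moebius (n : nat) : int :=
  if (0 < n)%N && [forall p : 'I_n.+1, prime p ==> (logn p n <= 1)%N]
  then ((-1) ^+ size (primes n))%R else 0%R.

Definition in_semigroup (P : pred nat) (n : nat) : bool :=
  (0 < n)%N && all P (primes n).

From mathcomp Require Import all_boot all_order all_algebra.
From mathcomp Require Import reals ring lra.
Import Order.TTheory GRing.Theory Num.Theory.

Set Implicit Arguments.
Unset Strict Implicit.
Unset Printing Implicit Defensive.

(* Write S(x) for the sum and let N := floor x.  Moebius inversion restricted
   to <P> gives  sum_(d in <P>, d <= N) mu(d) floor(N/d) = A,  the number of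
   m <= N without prime factors in P, so  N S(x) = A + E  where the error E
   comes from the fractional parts {N/d} and is at most B, the number of
   1 < d <= N in <P>, in absolute value.  An integer m > 1 cannot both lie in
   <P> and avoid P, so  1 <= A  and  A + B <= N,  whence  |A + E| <= N. *)

Definition coprime_to (P : pred nat) (m : nat) : bool := all (predC P) (primes m).

Lemma coprime_to_semigroup_eq1 (P : pred nat) m :
  in_semigroup P m -> coprime_to P m -> m = 1.
Proof.
case/andP=> m_gt0 mP mP'; apply/eqP; rewrite eqn_leq m_gt0 andbT leqNgt.
apply/negP=> m_gt1; have pm : pdiv m \in primes m.
  by rewrite mem_primes pdiv_prime // ltnW // pdiv_dvd.
by have := allP mP' _ pm; rewrite /= (allP mP _ pm).
Qed.

Lemma coprime_to_dvd (P : pred nat) d m :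
  0 < m -> d %| m -> coprime_to P m -> coprime_to P d.
Proof.
move=> m_gt0 dm /allP mP'; apply/allP=> p; rewrite mem_primes => /and3P[pp _ pd].
by apply: mP'; rewrite mem_primes pp m_gt0 (dvdn_trans pd dm).
Qed.

Lemma semigroup_dvd (P : pred nat) d m :
  0 < d -> d %| m -> in_semigroup P m -> in_semigroup P d.
Proof.
move=> d_gt0 dm /andP[m_gt0 /allP mP]; rewrite /in_semigroup d_gt0.
apply/allP=> p; rewrite mem_primes => /and3P[pp _ pd].
by apply: mP; rewrite mem_primes pp m_gt0 (dvdn_trans pd dm).
Qed.

Lemma semigroupMp (P : pred nat) d p :
  P p -> prime p -> in_semigroup P d -> in_semigroup P (d * p).
Proof.
move=> Pp pp /andP[d_gt0 dP]; rewrite /in_semigroup muln_gt0 d_gt0 prime_gt0 //=.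
apply/allP=> q; rewrite (primesM _ d_gt0 (prime_gt0 pp)) (primes_prime pp) !inE.
by case/orP=> [/(allP dP)|/eqP->].
Qed.

Lemma squarefreeP n : 0 < n ->
  reflect (forall p, prime p -> logn p n <= 1)
          [forall p : 'I_n.+1, prime p ==> (logn p n <= 1)].
Proof.
move=> n_gt0; apply: (iffP forallP) => [sqf_n p pp|sqf_n p].
  have [pn|np] := leqP p n.
    by have := sqf_n (Ordinal (pn : p < n.+1)); rewrite /= pp.
  rewrite leqNgt; apply/negP=> /ltnW; rewrite logn_gt0 mem_primes => /and3P[_ _].
  by move/(dvdn_leq n_gt0); rewrite leqNgt np.
by apply/implyP=> /sqf_n.
Qed.

Lemma moebius1 : moebius 1 = 1%R.
Proof. by rewrite /moebius; case: squarefreeP => // -[p _]; rewrite logn1. Qed.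

Lemma moebius_sqr_dvd p d : prime p -> 0 < d -> p ^ 2 %| d -> moebius d = 0%R.
Proof.
move=> pp d_gt0 p2d; rewrite /moebius d_gt0; case: squarefreeP => // sqf_d.
by have := sqf_d p pp; rewrite leqNgt -(pfactor_dvdn _ pp d_gt0) p2d.
Qed.

Lemma moebiusMp p d :
  prime p -> 0 < d -> ~~ (p %| d) -> moebius (d * p) = (- moebius d)%R.
Proof.
move=> pp d_gt0 pNd; have dp_gt0 : 0 < d * p by rewrite muln_gt0 d_gt0 prime_gt0.
have lognMp q : logn q (d * p) = logn q d + (q == p).
  by rewrite (lognM _ d_gt0 (prime_gt0 pp)) (logn_prime q pp).
have size_primesMp : size (primes (d * p)) = (size (primes d)).+1.
  have pNprimes : p \notin primes d by rewrite mem_primes pp d_gt0.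
  apply: (@perm_size _ _ (p :: primes d)); apply: uniq_perm.
  - exact: primes_uniq.
  - by rewrite /= pNprimes primes_uniq.
  - by move=> q; rewrite (primesM _ d_gt0 (prime_gt0 pp)) (primes_prime pp) !inE orbC.
have sqfMp : [forall q : 'I_(d * p).+1, prime q ==> (logn q (d * p) <= 1)] =
             [forall q : 'I_d.+1, prime q ==> (logn q d <= 1)].
  apply/idP/idP.
    move/(squarefreeP dp_gt0)=> sqf; apply/(squarefreeP d_gt0) => q qp.
    by apply: leq_trans (sqf q qp); rewrite lognMp leq_addr.
  move/(squarefreeP d_gt0)=> sqf; apply/(squarefreeP dp_gt0) => q qp.
  rewrite lognMp; case: eqP => [->|_]; last by rewrite addn0 sqf.
  by rewrite (@logn_coprime p d) // prime_coprime.
rewrite /moebius dp_gt0 d_gt0 sqfMp; case: ifP => _; last by rewrite oppr0.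
by rewrite size_primesMp exprS mulN1r.
Qed.

Local Open Scope ring_scope.

Lemma norm_moebius_le1 (R : numDomainType) d : `|(moebius d)%:~R : R| <= 1.
Proof.
rewrite /moebius; case: ifP => _; last by rewrite normr0.
by rewrite rmorphXn /= rmorphN1 normrX normrN1 expr1n.
Qed.

Lemma sum_involution_eq0 (R : numDomainType) n (C : pred nat) (h : nat -> nat)
    (F : nat -> R) :
  (forall d, C d -> (d < n)%N) -> (forall d, C d -> C (h d)) ->
  (forall d, C d -> h (h d) = d) -> (forall d, C d -> F (h d) = - F d) ->
  \sum_(0 <= d < n | C d) F d = 0.
Proof.
move=> Cn Ch hK Fh; rewrite big_mkord.
pose g (i : 'I_n) : 'I_n := if C i then insubd i (h i) else i.
have val_g (i : 'I_n) : C i -> val (g i) = h i.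
  by move=> Ci; rewrite /g Ci val_insubd Cn // Ch.
have Cg (i : 'I_n) : C (g i) = C i.
  by case Ci: (C i); [rewrite val_g // Ch | rewrite /g Ci Ci].
have gK : cancel g g.
  move=> i; apply: val_inj; case Ci: (C i); last by rewrite /g Ci Ci.
  by rewrite val_g ?Cg // val_g // hK.
set S := \sum_(i < n | C i) F i.
have SN : S = - S.
  rewrite {1}/S (reindex_inj (can_inj gK)) /= -sumrN.
  apply: eq_big => [i|i Cgi]; first by rewrite Cg.
  have Ci : C i by rewrite -Cg.
  by rewrite val_g // Fh.
have : S *+ 2 == 0 by rewrite mulr2n {2}SN subrr.
by rewrite mulrn_eq0 => /eqP.
Qed.

(* The involution d <-> d p (resp. d / p), for a prime p in P dividing M,
   pairs off the squarefree divisors of M in <P> with opposite signs. *)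
Lemma sum_moebius_dvd_semigroup (R : numDomainType) (P : pred nat) M : (0 < M)%N ->
  \sum_(0 <= d < M.+1 | in_semigroup P d && (d %| M)%N) ((moebius d)%:~R : R)
  = (coprime_to P M)%:R.
Proof.
move=> M_gt0; have [MP'|] := boolP (coprime_to P M).
  rewrite (eq_bigl (pred1 1%N)) => [|d /=].
    by rewrite big_nat1_eq ltnS M_gt0 moebius1.
  apply/andP/eqP=> [[dP dM]|->]; last by rewrite /in_semigroup dvd1n.
  exact: coprime_to_semigroup_eq1 dP (coprime_to_dvd M_gt0 dM MP').
case/allPn=> p; rewrite mem_primes negbK => /and3P[pp _ pM] Pp.
rewrite (bigID (fun d => p ^ 2 %| d)%N) /= big1 ?add0r; last first.
  by move=> d /andP[/andP[/andP[d_gt0 _] _] /(moebius_sqr_dvd pp d_gt0)->].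
have divpE d : (0 < d)%N -> (p %| d)%N -> ~~ (p ^ 2 %| d)%N ->
    [/\ (0 < d %/ p)%N, ~~ (p %| d %/ p)%N & (d %/ p * p = d)%N].
  move=> d_gt0 pd p2Nd; split; last by rewrite divnK.
    by rewrite divn_gt0 ?prime_gt0 // dvdn_leq.
  by rewrite dvdn_divRL // -expnSr.
apply: (@sum_involution_eq0 _ _ _ (fun d => if p %| d then d %/ p else d * p)%N).
- by move=> d /andP[/andP[_ dM] _]; rewrite ltnS dvdn_leq.
- move=> d /andP[/andP[dP dM] p2Nd]; have /andP[d_gt0 _] := dP.
  have [pd|pNd] := boolP (p %| d)%N.
    have [q_gt0 pNq qpE] := divpE d d_gt0 pd p2Nd.
    have qd : (d %/ p %| d)%N by rewrite -{2}qpE dvdn_mulr.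
    rewrite (semigroup_dvd q_gt0 qd dP) (dvdn_trans qd dM) /=.
    by apply: contra pNq; apply: dvdn_trans; rewrite dvdn_exp.
  rewrite (semigroupMp Pp pp dP) Gauss_dvd ?dM ?pM /=; last first.
    by rewrite coprime_sym prime_coprime.
  by rewrite expnSr expn1 dvdn_pmul2r ?prime_gt0.
- move=> d /andP[/andP[/andP[d_gt0 _] _] p2Nd]; have [pd|pNd] := boolP (p %| d)%N.
    by have [_ pNq qpE] := divpE d d_gt0 pd p2Nd; rewrite (negbTE pNq).
  by rewrite dvdn_mull // mulnK ?prime_gt0.
- move=> d /andP[/andP[/andP[d_gt0 _] _] p2Nd]; have [pd|pNd] := boolP (p %| d)%N.
    have [q_gt0 pNq qpE] := divpE d d_gt0 pd p2Nd.
    by rewrite -{2}qpE moebiusMp // mulrNz opprK.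
  by rewrite moebiusMp // mulrNz.
Qed.

Lemma sum_moebius_divn (R : numDomainType) (P : pred nat) N :
  \sum_(0 <= d < N.+1 | in_semigroup P d) ((moebius d)%:~R * (N %/ d)%:R : R)
  = \sum_(1 <= m < N.+1) (coprime_to P m)%:R.
Proof.
elim: N => [|N IHN]; first by rewrite big_ltn_cond // !big_geq.
rewrite [RHS]big_nat_recr //= -IHN -sum_moebius_dvd_semigroup //.
rewrite [X in _ + X]big_mkcondr /=.
have divnSE d : in_semigroup P d -> (moebius d)%:~R * (N.+1 %/ d)%:R
    = (moebius d)%:~R * (N %/ d)%:R + (moebius d)%:~R * (d %| N.+1)%:R :> R.
  by rewrite /in_semigroup => /andP[d_gt0 _]; rewrite divnS // natrD mulrDr addrC.
rewrite (eq_bigr _ divnSE) big_split /=; congr (_ + _).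
  rewrite big_mkcond [RHS]big_mkcond big_nat_recr //=.
  by rewrite divn_small // mulr0 if_same addr0.
by apply: eq_bigr => d _; rewrite mulr_natr mulrb.
Qed.

Lemma norm_sum_moebius_mod_le (R : realFieldType) (P : pred nat) N :
  `|\sum_(0 <= d < N.+1 | in_semigroup P d)
      ((moebius d)%:~R * ((N %% d)%:R / d%:R) : R)|
  <= \sum_(0 <= d < N.+1 | in_semigroup P d) (1 < d)%N%:R.
Proof.
apply: le_trans (ler_norm_sum _ _ _) _; apply: ler_sum => d /andP[d_gt0 _].
have [d_gt1|] := ltnP 1 d; last first.
  rewrite leq_eqVlt ltnS leqn0 (gtn_eqF d_gt0) orbF => /eqP->.
  by rewrite modn1 mul0r mulr0 normr0.
rewrite normrM -[1%:R](mul1r 1) ler_pM ?norm_moebius_le1 //.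
by rewrite ger0_norm ?divr_ge0 // ler_pdivrMr ?ltr0n // mul1r ler_nat ltnW ?ltn_pmod.
Qed.

Lemma count_coprime_to_add_semigroup_le (R : numDomainType) (P : pred nat) N :
  \sum_(1 <= m < N.+1) (coprime_to P m)%:R
    + \sum_(0 <= d < N.+1 | in_semigroup P d) (1 < d)%N%:R <= N%:R :> R.
Proof.
rewrite [X in _ + X]big_ltn_cond //= [X in _ + X]big_mkcond -big_split /=.
have -> : N%:R = \sum_(1 <= m < N.+1) 1 :> R by rewrite sumr_const_nat subn1.
apply: ler_sum => m _.
case: ifP => [mP|_]; last by rewrite addr0 lern1 leq_b1.
have [mP'|] := boolP (coprime_to P m); last by rewrite add0r lern1 leq_b1.
by rewrite (coprime_to_semigroup_eq1 mP mP') addr0.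
Qed.

Lemma norm_sum_moebius_div_le1 (R : realFieldType) (P : pred nat) N :
  `|\sum_(0 <= d < N.+1 | in_semigroup P d) ((moebius d)%:~R / d%:R : R)| <= 1.
Proof.
have [->|N_gt0] := posnP N; first by rewrite big_ltn_cond //= big_geq // normr0.
set S := \sum_(_ <= _ < _ | _) _.
set A := \sum_(1 <= m < N.+1) (coprime_to P m)%:R : R.
set B := \sum_(0 <= d < N.+1 | in_semigroup P d) (1 < d)%N%:R : R.
set E := \sum_(0 <= d < N.+1 | in_semigroup P d)
           ((moebius d)%:~R * ((N %% d)%:R / d%:R) : R).
have NSE : N%:R * S = A + E.
  rewrite /A -sum_moebius_divn /E mulr_sumr -big_split /=.
  apply: eq_bigr => d /andP[d_gt0 _]; rewrite {1}(divn_eq N d) natrD natrM.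
  by field; rewrite pnatr_eq0 -lt0n.
have A_ge1 : 1 <= A.
  rewrite /A big_ltn ?ltnS // /= lerDl sumr_ge0 // => m _; exact: ler0n.
have B_ge0 : 0 <= B by apply: sumr_ge0 => d _; exact: ler0n.
have AB_leN : A + B <= N%:R := count_coprime_to_add_semigroup_le R P N.
have /andP[E_geNB E_leB] : - B <= E <= B by rewrite -ler_norml norm_sum_moebius_mod_le.
have N_gt0R : 0 < N%:R :> R by rewrite ltr0n.
rewrite -(ler_pM2l N_gt0R) mulr1 -[N%:R in leLHS]ger0_norm ?ler0n // -normrM NSE.
by rewrite ler_norml; apply/andP; split; lra.
Qed.

Theorem theorem1p1 (R : realType) (P : pred nat)
    (HP : forall p, P p -> prime p) (x : R) :
  `| \sum_(0 <= n < (Num.truncn `|x|).+1 | in_semigroup P n && ((n%:R : R) <= x))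
        ((moebius n)%:~R / (n%:R : R)) | <= 1.
Proof.
have [x_lt0|x_ge0] := ltP x 0.
  rewrite big1 ?normr0 // => n /andP[_ nx].
  by have := lt_le_trans x_lt0 (le_trans (ler0n R n) nx); rewrite ltxx.
rewrite (ger0_norm x_ge0).
have -> : \sum_(0 <= n < (Num.truncn x).+1 | in_semigroup P n && (n%:R <= x))
            ((moebius n)%:~R / n%:R)
    = \sum_(0 <= n < (Num.truncn x).+1 | in_semigroup P n) ((moebius n)%:~R / n%:R : R).
  rewrite big_nat_cond [RHS]big_nat_cond; apply: eq_bigl => n /=.
  have [n_le|//] := boolP (n < (Num.truncn x).+1)%N.
  by rewrite -(truncn_ge_nat _ x_ge0) -ltnS n_le andbT.
exact: norm_sum_moebius_div_le1.
Qed.
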